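(* Let $\alpha\in(0,1)$, $R_{th}>0$ and put $\varepsilon = 2^{2R_{th}/(1-\alpha)}-1$. For a link $j\in\{SR_m,\;R_mD\}$ let the IQI amplitude/phase parameters $\xi_{t_j},\xi_{r_j}>0$, $\phi_{t_j},\phi_{r_j}\in\mathbb{R}$ be given, set $\mu_{t_j}=\tfrac12(1+\xi_{t_j}e^{i\phi_{t_j}})$, $v_{t_j}=\tfrac12(1-\xi_{t_j}e^{-i\phi_{t_j}})$, $\mu_{r_j}=\tfrac12(1+\xi_{r_j}e^{-i\phi_{r_j}})$, $v_{r_j}=\tfrac12(1-\xi_{r_j}e^{i\phi_{r_j}})$, and $p_j=|\mu_{t_j}\mu_{r_j}+v_{t_j}^*v_{r_j}|^2$, $q_j=|\mu_{r_j}v_{t_j}+\mu_{t_j}^*v_{r_j}|^2$. Assume $p_j-\varepsilon q_j>0$ for both links. Let $X_{SR_m}=|\hat h_{SR_m}|^2$ and $X_{R_mD}=|\hat h_{R_mD}|^2$ be independent exponential random variables with rates $\lambda_{SR_m}>0$ and $\lambda_{R_mD}>0$ (i.e. $\Pr\{X_j>x\}=e^{-\lambda_j x}$ for $x\ge 0$), and let the channel-estimation-error variances satisfy $\sigma^2_{e_{SR_m}}=\sigma^2_{e_{R_mD}}=t>0$. Define the high-SNR capacities $$C^{\infty}_{j}=\frac{1-\alpha}{2}\log_2\!\Big(1+\frac{X_j p_j}{\sigma^2_{e_j}p_j+X_j q_j+\sigma^2_{e_j}q_j}\Big),\quad j\in\{SR_m,R_mD\}.$$ Then $$\Pr\{\min(C^\infty_{SR_m},C^\infty_{R_mD})<R_{th}\}=1-e^{-\lambda_{SR_m}H_1-\lambda_{R_mD}H_2},$$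 where $H_1=\dfrac{\varepsilon\sigma^2_{e_{SR_m}}(p_{SR_m}+q_{SR_m})}{p_{SR_m}-\varepsilon q_{SR_m}}$ and $H_2=\dfrac{\varepsilon\sigma^2_{e_{R_mD}}(p_{R_mD}+q_{R_mD})}{p_{R_mD}-\varepsilon q_{R_mD}}$.
   Context: Dual-hop decode-and-forward relaying from a source $S$ via a randomly chosen relay $R_m$ to a destination $D$, in the presence of transmitter/receiver I/Q imbalance and channel estimation errors; $\hat h_j$ denotes the estimated channel of link $j$ under Rayleigh fading, $\sigma^2_{e_j}$ the estimation-error variance, $\alpha$ the energy-harvesting time-allocation factor. The quantity on the left is the asymptotic (high-SNR) outage probability of random relay selection; $z^*$ denotes complex conjugate and $i$ the imaginary unit. *)

From HB Require Import structures.
From mathcomp Require Import all_boot all_order all_algebra.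
From mathcomp Require Import all_classical all_reals all_analysis.
From mathcomp Require Import complex.
Set Implicit Arguments. Unset Strict Implicit. Unset Printing Implicit Defensive.
Import Order.TTheory GRing.Theory Num.Theory.
Import numFieldNormedType.Exports.
Local Open Scope classical_set_scope.
Local Open Scope ring_scope.

Section IQI.
Variable R : realType.
Local Open Scope complex_scope.

Definition cexpi (phi : R) : R[i] := cos phi +i* sin phi.
Definition half : R[i] := (2%:R)^-1.
Definition mu_t (xi phi : R) : R[i] := half * (1 + xi%:C * cexpi phi).
Definition v_t (xi phi : R) : R[i] := half * (1 - xi%:C * cexpi (- phi)).
Definition mu_r (xi phi : R) : R[i] := half * (1 + xi%:C * cexpi (- phi)).
Definition v_r (xi phi : R) : R[i] := half * (1 - xi%:C * cexpi phi).

Definition sqabs (z : R[i]) : R := (Normc.normc z) ^+ 2.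

Definition p_iqi (xit phit xir phir : R) : R :=
  sqabs (mu_t xit phit * mu_r xir phir + (v_t xit phit)^* * v_r xir phir).
Definition q_iqi (xit phit xir phir : R) : R :=
  sqabs (mu_r xir phir * v_t xit phit + (mu_t xit phit)^* * v_r xir phir).
End IQI.

Definition log2 {R : realType} (x : R) : R := ln x / ln 2.

Definition Cinf {R : realType} (alpha p q s2 x : R) : R :=
  (1 - alpha) / 2 * log2 (1 + x * p / (s2 * p + x * q + s2 * q)).

Definition exp_tail {R : realType} {d} {T : measurableType d}
  (P : probability T R) (X : T -> R) (lam : R) : Prop :=
  forall x : R, 0 <= x -> P [set w | x < X w] = (expR (- (lam * x)))%:E.

Definition indep2 {R : realType} {d} {T : measurableType d}
  (P : probability T R) (X Y : T -> R) : Prop :=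
  forall A B : set R, measurable A -> measurable B ->
    P (X @^-1` A `&` Y @^-1` B) = (P (X @^-1` A) * P (Y @^-1` B))%E.

From HB Require Import structures.
From mathcomp Require Import all_boot all_order all_algebra.
From mathcomp Require Import all_classical all_reals all_analysis.
From mathcomp Require Import complex lra ring measurable_realfun.
Import Order.TTheory GRing.Theory Num.Theory.
Import numFieldNormedType.Exports.
Set Implicit Arguments. Unset Strict Implicit. Unset Printing Implicit Defensive.
Local Open Scope classical_set_scope.
Local Open Scope ring_scope.

(* For a positive gain x, a link's capacity is below R_th exactly when its SINR
   x p / (s (p + q) + x q) is below eps = 2^(2 R_th / (1 - alpha)) - 1, that is,
   since p - eps q > 0, exactly when x < H.  Both gains are positive almost
   surely, so up to a null set the complement of the outage event is
   {X1 >= H1} /\ {X2 >= H2}, whose probability factorises by independence into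
   e^(-lam1 H1) e^(-lam2 H2): the exponential law has no atoms, so its closed
   tails are its open tails. *)

Section rate_threshold.
Variable R : realType.

Definition sinr (p q s x : R) : R := x * p / (s * p + x * q + s * q).

Definition sinr_threshold (alpha Rth : R) : R := 2 `^ (2 * Rth / (1 - alpha)) - 1.

Lemma sqabs_ge0 (z : R[i]) : 0 <= sqabs z.
Proof. exact: sqr_ge0. Qed.

Lemma log2_lt (k y : R) : 0 < y -> (log2 y < k) = (y < 2 `^ k).
Proof.
move=> y0; have ln2_gt0 : 0 < ln (2 : R) by rewrite ln_gt0 // ltr1n.
by rewrite /log2 ltr_pdivrMr // -ln_powR ltr_ln ?posrE ?powR_gt0.
Qed.

Lemma sinr_threshold_gt0 (alpha Rth : R) :
  0 < alpha < 1 -> 0 < Rth -> 0 < sinr_threshold alpha Rth.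
Proof.
move=> /andP[a0 a1] Rth0; rewrite subr_gt0.
rewrite -log2_lt // /log2 ln1 mul0r divr_gt0 //; lra.
Qed.

Lemma Cinf_lt_sinr (alpha Rth p q s x : R) : 0 < alpha < 1 -> 0 <= sinr p q s x ->
  (Cinf alpha p q s x < Rth) = (sinr p q s x < sinr_threshold alpha Rth).
Proof.
move=> /andP[a0 a1] sinr_ge0; rewrite /Cinf -/(sinr p q s x).
rewrite mulrC -ltr_pdivlMr ?divr_gt0 ?subr_gt0 // log2_lt; last by lra.
rewrite /sinr_threshold ltrBrDl addrC (_ : Rth / _ = 2 * Rth / (1 - alpha)) //.
by field; lra.
Qed.

Lemma sinr_lt_gain (eps p q s x : R) : 0 <= eps -> 0 < s -> 0 <= q -> 0 <= x ->
  0 < p - eps * q ->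
  (sinr p q s x < eps) = (x < eps * s * (p + q) / (p - eps * q)).
Proof.
move=> eps0 s0 q0 x0 gap; have p0 : 0 < p by nra.
have den0 : 0 < s * p + x * q + s * q by nra.
by rewrite ltr_pdivrMr // ltr_pdivlMr //; apply/idP/idP => ?; nra.
Qed.

Definition gain_threshold (alpha Rth p q s : R) : R :=
  let eps := sinr_threshold alpha Rth in eps * s * (p + q) / (p - eps * q).

Lemma gain_threshold_gt0 (alpha Rth p q s : R) :
  0 < alpha < 1 -> 0 < Rth -> 0 < s -> 0 <= q ->
  0 < p - sinr_threshold alpha Rth * q -> 0 < gain_threshold alpha Rth p q s.
Proof.
move=> alpha01 Rth0 s0 q0 gap; have eps0 := sinr_threshold_gt0 alpha01 Rth0.
have p0 : 0 < p by nra.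
by rewrite /gain_threshold divr_gt0 // !mulr_gt0 // ltr_pwDl.
Qed.

Lemma Cinf_lt_gain (alpha Rth p q s x : R) :
  0 < alpha < 1 -> 0 < Rth -> 0 < s -> 0 <= q ->
  0 < p - sinr_threshold alpha Rth * q -> 0 <= x ->
  (Cinf alpha p q s x < Rth) = (x < gain_threshold alpha Rth p q s).
Proof.
move=> alpha01 Rth0 s0 q0 gap x0; have eps0 := sinr_threshold_gt0 alpha01 Rth0.
have p0 : 0 < p by nra.
have sinr0 : 0 <= sinr p q s x by rewrite /sinr divr_ge0 //; nra.
by rewrite Cinf_lt_sinr // sinr_lt_gain ?(ltW eps0).
Qed.

End rate_threshold.

Section measurable_Cinf.
Variable R : realType.

Lemma measurable_inv : measurable_fun [set: R] (@GRing.inv R).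
Proof.
have m0 : measurable [set (0 : R)] := measurable_set1 0.
rewrite -(setUv [set 0]) setUC; apply/measurable_funU => //; first exact: measurableC.
split; last exact: measurable_fun_set1.
apply: open_continuous_measurable_fun.
  exact/closed_openC/accessible_closed_set1/hausdorff_accessible.
by move=> x /set_mem /eqP x0; exact: inv_continuous.
Qed.

Lemma measurable_Cinf (alpha p q s : R) : measurable_fun [set: R] (Cinf alpha p q s).
Proof.
apply: measurable_funM => //; apply: measurable_funM => //.
apply: measurableT_comp; first exact: measurable_ln.
apply: measurable_funD => //; apply: measurable_funM; first exact: measurable_funM.
apply: measurableT_comp; first exact: measurable_inv.
by apply: measurable_funD => //; apply: measurable_funD => //; exact: measurable_funM.
Qed.

End measurable_Cinf.

Section probability_lemmas.
Context {R : realType} {d : measure_display} {T : measurableType d}.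

Lemma measurable_ltr_set (f g : T -> R) : measurable_fun [set: T] f ->
  measurable_fun [set: T] g -> measurable [set w | f w < g w].
Proof.
move=> mf mg; rewrite -[X in measurable X]setTI.
by apply: (measurable_fun_ltr mf mg measurableT).
Qed.

Lemma measurable_ler_set (f g : T -> R) : measurable_fun [set: T] f ->
  measurable_fun [set: T] g -> measurable [set w | f w <= g w].
Proof.
move=> mf mg; rewrite -[X in measurable X]setTI.
by apply: (measurable_fun_ler mf mg measurableT).
Qed.

Variable P : probability T R.

Lemma probability_eq_on_full (A B S : set T) :
  measurable A -> measurable B -> measurable S -> P S = 1%E ->
  A `&` S = B `&` S -> P A = P B.
Proof.
move=> mA mB mS PS ABS.
suff PIS C : measurable C -> P (C `&` S) = P C by rewrite -PIS // ABS PIS.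
move=> mC; have PSc0 : P (~` S) = 0%E by rewrite probability_setC // PS subee.
have PCSc0 : P (C `\` S) = 0%E.
  by apply: (subset_measure0 (measurableD mC mS) (measurableC mS)) PSc0 => w [].
by rewrite [RHS](measureDI P mC mS) -[LHS]add0e; congr (_ + _)%E; exact/esym/PCSc0.
Qed.

Lemma exp_tail_ge (X : {mfun T >-> R}) (lam H : R) : 0 < H -> exp_tail P X lam ->
  P (X @^-1` `[H, +oo[) = (expR (- (lam * H)))%:E.
Proof.
move=> H0 tailX.
have mgt x : measurable [set w | x < X w] by exact: measurable_ltr_set.
have mge x : measurable [set w | x <= X w] by exact: measurable_ler_set.
rewrite preimage_itvcy -[P _]fineK ?fin_num_measure //; congr _%:E.
set r := fine _; have Pr : P [set w | H <= X w] = r%:E by rewrite fineK ?fin_num_measure.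
apply/eqP; rewrite eq_le; apply/andP; split; last first.
  rewrite -lee_fin -Pr -(tailX H (ltW H0)).
  by apply: le_measure; rewrite ?inE // => w /ltW.
(* P{X >= H} is squeezed between the tails at H and at H - δ; let δ -> 0+. *)
pose f δ := expR (- (lam * (H - δ))).
have f_cont : f δ @[δ --> 0^'+] --> f 0.
  apply: cvg_at_right_filter.
  apply: (continuous_comp (f := fun δ => - (lam * (H - δ)))); last exact: continuous_expR.
  by apply: cvgN; apply: cvgMr; apply: cvgB; [exact: cvg_cst|exact: cvg_id].
have -> : expR (- (lam * H)) = f 0 by rewrite /f subr0.
apply: (ler_cvg_to (cvg_cst r) f_cont).
near=> δ; rewrite -lee_fin -Pr -tailX; last first.
  by rewrite subr_ge0 ltW //; near: δ; exact: nbhs_right_lt.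
apply: le_measure; rewrite ?inE // => w /= Hw.
by rewrite ltrBlDr ltr_pwDr //; near: δ; exact: nbhs_right_gt.
Unshelve. all: by end_near.
Qed.

End probability_lemmas.

Theorem corollary1 (R : realType) (d : measure_display) (T : measurableType d)
  (P : probability T R) (X1 X2 : {mfun T >-> R})
  (alpha Rth t lam1 lam2 : R)
  (xit1 phit1 xir1 phir1 xit2 phit2 xir2 phir2 : R) :
  0 < alpha < 1 -> 0 < Rth -> 0 < t -> 0 < lam1 -> 0 < lam2 ->
  0 < xit1 -> 0 < xir1 -> 0 < xit2 -> 0 < xir2 ->
  let eps := 2 `^ (2 * Rth / (1 - alpha)) - 1 in
  let p1 := p_iqi xit1 phit1 xir1 phir1 in
  let q1 := q_iqi xit1 phit1 xir1 phir1 in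
  let p2 := p_iqi xit2 phit2 xir2 phir2 in
  let q2 := q_iqi xit2 phit2 xir2 phir2 in
  0 < p1 - eps * q1 -> 0 < p2 - eps * q2 ->
  exp_tail P X1 lam1 -> exp_tail P X2 lam2 -> indep2 P X1 X2 ->
  let H1 := eps * t * (p1 + q1) / (p1 - eps * q1) in
  let H2 := eps * t * (p2 + q2) / (p2 - eps * q2) in
  P [set w | Num.min (Cinf alpha p1 q1 t (X1 w)) (Cinf alpha p2 q2 t (X2 w)) < Rth]
  = (1 - expR (- (lam1 * H1) - lam2 * H2))%:E.
Proof.
move=> alpha01 Rth0 t0 _ _ _ _ _ _ eps p1 q1 p2 q2 gap1 gap2 tail1 tail2 indep H1 H2.
set out := [set w | _ < Rth].
set pos := [set w | 0 < X1 w] `&` [set w | 0 < X2 w].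
set good := [set w | H1 <= X1 w] `&` [set w | H2 <= X2 w].
have Ppos : P pos = 1%E.
  rewrite /pos -!preimage_itvoy indep // !preimage_itvoy tail1 // tail2 //.
  by rewrite !mulr0 oppr0 expR0 mule1.
have out_pos : out `&` pos = ~` good `&` pos.
  rewrite /out; apply/seteqP; split => w [/= + [X1w X2w]];
    rewrite gt_min !Cinf_lt_gain ?sqabs_ge0 ?(ltW X1w) ?(ltW X2w) // !ltNge -negb_and.
  - by move=> /negP not_good; split => // /andP.
  - by move=> not_good; split => //; apply/negP => /andP.
have mout : measurable out.
  by apply: measurable_ltr_set => //; apply: measurable_minr;
    apply: measurableT_comp (measurable_Cinf _ _ _ _) _.
have mpos : measurable pos by apply: measurableI; exact: measurable_ltr_set.
have mgood : measurable good by apply: measurableI; exact: measurable_ler_set.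
have H1_gt0 := gain_threshold_gt0 alpha01 Rth0 t0 (sqabs_ge0 _) gap1.
have H2_gt0 := gain_threshold_gt0 alpha01 Rth0 t0 (sqabs_ge0 _) gap2.
rewrite (probability_eq_on_full mout (measurableC mgood) mpos Ppos out_pos).
rewrite probability_setC // /good -!preimage_itvcy indep //.
by rewrite (exp_tail_ge H1_gt0 tail1) (exp_tail_ge H2_gt0 tail2) -EFinM -EFinB expRD.
Qed.
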